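(* Let $n\ge3$, $\emptyset\ne S\subseteq\{1,\dots,n-1\}$, $\mathfrak p:=\sum_{i\in S}\mathfrak p_i'$. Then $E_\infty(\mathbb S_{CI})\subseteq E_\infty(\mathbb S_{n-1},\mathfrak p)$ for every $I\in\mathcal J(\mathfrak p)$ with $2\le|I|\le n-1$, and $U_I(K)\subseteq E_\infty(\mathbb S_{n-1},\mathfrak p)$ for every $I\in\mathcal J(\mathfrak p)$ with $3\le|I|\le n-1$. In particular $\widetilde{\mathcal E}_{n,s}(\mathfrak p)\subseteq E_\infty(\mathbb S_{n-1},\mathfrak p)$ for $s=3,\dots,n-1$.
   Context: $K$ is a field, $\mathbb N=\{0,1,\dots\}$. $\mathbb S_n$: $K$-algebra generated by $x_1,\dots,x_n,y_1,\dots,y_n$ with relations $y_ix_i=1$, $[x_i,y_j]=[x_i,x_j]=[y_i,y_j]=0$ ($i\ne j$). $E_{st}(i):=x_i^sy_i^t-x_i^{s+1}y_i^{t+1}$, $e_i:=E_{00}(i)$, $e_I:=\prod_{i\in I}e_i$, $E_{\alpha\beta}(I):=\prod_{i\in I}E_{\alpha_i\beta_i}(i)$. $\mathfrak p_n$ = ideal of $\mathbb S_n$ generated by $e_n$. $\mathbb S_{n-1}$ = subalgebra generated by $x_k,y_k$, $k<n$; $\mathfrak p_i'$ = ideal of $\mathbb S_{n-1}$ generated by $e_i$. $\mathrm{GL}_\infty(\mathbb S_{n-1})$ is identified with the group of units of $\mathbb S_n$ in $1+\mathfrak p_n$ via $(a_{kl})\mapsto 1+\sum(a_{kl}-\delta_{kl})E_{kl}(n)$.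 $E_\infty(\mathbb S_{n-1},\mathfrak p)$ is the relative elementary group, the normal subgroup of $E_\infty(\mathbb S_{n-1})$ generated by the elements $1+aE_{kl}(n)$ with $a\in\mathfrak p$, $k\ne l$. $\mathcal J(\mathfrak p):=\{J\subseteq\{1,\dots,n\}: n\in J,\ J\cap S\ne\emptyset\}$. $\mu_I(\lambda):=\lambda e_I+1-e_I$, $U_I(K):=\{\mu_I(\lambda):\lambda\in K^*\}$; $\mathbb S_{CI}$ = subalgebra generated by $x_k,y_k$, $k\notin I$; $E_\infty(\mathbb S_{CI})$ = subgroup of $\mathbb S_n^*$ generated by $1+aE_{\alpha\beta}(I)$, $a\in\mathbb S_{CI}$, $\alpha\ne\beta\in\mathbb N^I$. $\widetilde{\mathcal E}_{n,s}(\mathfrak p)$ = set of products, in a fixed order over all $I\in\mathcal J(\mathfrak p)$ with $|I|=s$, of elements of $U_I(K)E_\infty(\mathbb S_{CI})$. *)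

(* Concrete faithful model of the Jacobson algebra S_n:
   S_n is realised as the subalgebra of K-linear operators on the space
   V = ((nat -> nat) -> K) of K-valued functions on multi-indices,
   generated by x_i, y_i (0-based variable indices i < n), where
     (x_i f)(a) = f(a - e_i) if a_i > 0, 0 otherwise,
     (y_i f)(a) = f(a + e_i).
   These satisfy y_i x_i = 1 and the commutation relations, and the
   representation is faithful (it contains the polynomial module). *)
From HB Require Import structures.
From mathcomp Require Import all_boot all_order all_algebra.
Set Implicit Arguments. Unset Strict Implicit. Unset Printing Implicit Defensive.
Import Order.TTheory GRing.Theory.
Local Open Scope ring_scope.

Section JacobsonModel.
Variable K : fieldType.

Definition Op := ((nat -> nat) -> K) -> ((nat -> nat) -> K).

Definition op1 : Op := fun f => f.
Definition op0 : Op := fun f a => 0.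
Definition opc (c : K) : Op := fun f a => c * f a.
Definition opadd (A B : Op) : Op := fun f a => A f a + B f a.
Definition opsub (A B : Op) : Op := fun f a => A f a - B f a.
Definition opmul (A B : Op) : Op := fun f => A (B f).
Definition opexp (A : Op) (k : nat) : Op := iter k (opmul A) op1.

Definition upd (a : nat -> nat) (i v : nat) : nat -> nat :=
  fun j => if j == i then v else a j.

Definition opx (i : nat) : Op :=
  fun f a => match a i with 0%N => 0 | k.+1 => f (upd a i k) end.
Definition opy (i : nat) : Op := fun f a => f (upd a i (a i).+1).

Definition Est (s t i : nat) : Op :=
  opsub (opmul (opexp (opx i) s) (opexp (opy i) t))
        (opmul (opexp (opx i) s.+1) (opexp (opy i) t.+1)).
Definition ee (i : nat) : Op := Est 0 0 i.

Inductive salg (P : pred nat) : Op -> Prop :=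
| salg_c c : salg P (opc c)
| salg_x i : P i -> salg P (opx i)
| salg_y i : P i -> salg P (opy i)
| salg_add A B : salg P A -> salg P B -> salg P (opadd A B)
| salg_mul A B : salg P A -> salg P B -> salg P (opmul A B).

Inductive ideal_gen (R G : Op -> Prop) : Op -> Prop :=
| ig0 : ideal_gen R G op0
| ig_gen a g b : R a -> G g -> R b ->
    ideal_gen R G (opmul a (opmul g b))
| ig_add A B : ideal_gen R G A -> ideal_gen R G B -> ideal_gen R G (opadd A B).

Inductive ideal_sum (J : nat -> Prop) (Id : nat -> Op -> Prop) : Op -> Prop :=
| is0 : ideal_sum J Id op0
| is_in i A : J i -> Id i A -> ideal_sum J Id A
| is_add A B : ideal_sum J Id A -> ideal_sum J Id B -> ideal_sum J Id (opadd A B).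

Inductive subgrp (X : Op -> Prop) : Op -> Prop :=
| sg1 : subgrp X op1
| sg_mul g x : subgrp X g -> X x -> subgrp X (opmul x g)
| sg_mulinv g x y : subgrp X g -> X x -> opmul x y = op1 -> opmul y x = op1 ->
    subgrp X (opmul y g).

Variable n : nat.

(* index of the last variable (the paper's x_n, y_n), 0-based *)
Definition lastv : nat := n.-1.

Definition Snm1 : Op -> Prop := salg (fun i => (i < n.-1)%N).

Definition pprime (i : nat) : Op -> Prop := ideal_gen Snm1 (eq (ee i)).

Definition Einf_gen (a_in : Op -> Prop) : Op -> Prop :=
  fun z => exists a k l, a_in a /\ k <> l /\
    z = opadd op1 (opmul a (Est k l lastv)).
Definition Einf : Op -> Prop := subgrp (Einf_gen Snm1).

Definition Erel (p : Op -> Prop) : Op -> Prop :=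
  subgrp (fun z => exists g ginv h,
    Einf g /\ opmul g ginv = op1 /\ opmul ginv g = op1 /\
    Einf_gen p h /\ z = opmul g (opmul h ginv)).

Definition inI (I : {set 'I_n}) (i : nat) : bool := [exists j in I, (j : nat) == i].

Definition inJ (S I : {set 'I_n}) : bool :=
  inI I lastv && (I :&: S != set0).

Definition SCI (I : {set 'I_n}) : Op -> Prop :=
  salg (fun i => (i < n)%N && ~~ inI I i).

(* product over i in I of operators F i (they commute; fixed order) *)
Definition prodI (I : {set 'I_n}) (F : 'I_n -> Op) : Op :=
  foldr (fun i acc => opmul (F i) acc) op1 (enum I).

Definition EI (I : {set 'I_n}) : Op := prodI I (fun i => ee i).
Definition Eab (I : {set 'I_n}) (al be : 'I_n -> nat) : Op :=
  prodI I (fun i => Est (al i) (be i) i).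

Definition EinfC (I : {set 'I_n}) : Op -> Prop :=
  subgrp (fun z => exists a (al be : 'I_n -> nat),
    SCI I a /\ [exists i in I, al i != be i] /\
    z = opadd op1 (opmul a (Eab I al be))).

Definition muI (I : {set 'I_n}) (lam : K) : Op :=
  opsub (opadd (opmul (opc lam) (EI I)) op1) (EI I).

Definition UI (I : {set 'I_n}) : Op -> Prop :=
  fun z => exists lam, lam != 0 /\ z = muI I lam.

Definition UEI (I : {set 'I_n}) : Op -> Prop :=
  fun z => exists u h, UI I u /\ EinfC I h /\ z = opmul u h.

Definition Etilde (S : {set 'I_n}) (s : nat) : Op -> Prop :=
  fun z => exists F : {set 'I_n} -> Op,
    (forall I, inJ S I -> #|I| = s -> UEI I (F I)) /\
    z = foldr (fun I acc => opmul (F I) acc) op1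
              (enum [set I : {set 'I_n} | inJ S I && (#|I| == s)]).

End JacobsonModel.

(* Everything is computed in the ring of K-linear operators containing S_n, in
   which the E_kl(n) are matrix units commuting with S_{n-1}.

   E_infty(S_CI): a generator 1 + a E_ab(I) with a in S_CI equals
   1 + b E_{a_n b_n}(n) with b = a * prod_{i in I, i <> n} E_{a_i b_i}(i), and b
   lies in p because I meets S.  If a_n <> b_n this is a relative generator;
   otherwise, picking j in I with a_j <> b_j, it is the commutator of the
   relative generator 1 + b E_{k,k+1}(n) with the elementary matrix
   1 + E_{b_j b_j}(j) E_{k+1,k}(n).

   U_I(K): as |I| >= 3, pick j in I different from n and from some i0 in I ∩ S.
   Then P = prod_{i in I \ {j,n}} e_i is an idempotent of p and
   mu_I(lambda) = 1 + c (1 - x_j y_j) E_00(n) with c = (lambda - 1) P.  In the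
   2x2 block of the E_kl(n), k, l <= 1, six conjugations by elementary matrices
   carry D = diag(1, 1 + c) to diag(1 + c (1 - x_j y_j), 1 + c) (a Whitehead-lemma
   computation).  Each conjugation keeps the current matrix times D^-1 in
   E(S_{n-1}, p), since the commutator of an elementary matrix with D is a
   relative generator (c is in p); at the end this product is mu_I(lambda). *)

From HB Require Import structures.
From mathcomp Require Import all_boot all_order all_algebra.
From mathcomp Require Import boolp zify ring.
Set Implicit Arguments. Unset Strict Implicit. Unset Printing Implicit Defensive.
Import GRing.Theory.
Local Open Scope ring_scope.

(** * The ring of linear operators *)

Section LinearOperators.
Variable K : fieldType.

(* Composition of operators distributes over sums on the left only for additive
   operators, so we compute in the subring of K-linear operators. *)
Definition linear_op (A : Op K) :=
  (forall f g a, A (fun b => f b + g b) a = A f a + A g a) /\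
  (forall (c : K) f a, A (fun b => c * f b) a = c * A f a).

Definition linop := {A : Op K | linear_op A}.
HB.instance Definition _ := gen_eqMixin linop.
HB.instance Definition _ := gen_choiceMixin linop.

Lemma linop_inj (r s : linop) : sval r = sval s -> r = s.
Proof. by case: r s => [A HA] [B HB] /= AB; apply: eq_exist. Qed.

Ltac linop_ext := apply: linop_inj; apply: functional_extensionality_dep => f;
  apply: functional_extensionality_dep => a.

Definition opopp (A : Op K) : Op K := fun f a => - A f a.

Lemma linear_op0 : linear_op (@op0 K).
Proof. by split=> *; rewrite /op0 ?addr0 ?mulr0. Qed.

Lemma linear_op1 : linear_op (@op1 K).
Proof. by []. Qed.

Lemma linear_opadd A B : linear_op A -> linear_op B -> linear_op (opadd A B).
Proof.
move=> [A1 A2] [B1 B2]; split=> *; rewrite /opadd ?A1 ?B1 ?A2 ?B2.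
  by rewrite addrACA.
by rewrite mulrDr.
Qed.

Lemma linear_opopp A : linear_op A -> linear_op (opopp A).
Proof.
move=> [A1 A2]; split=> *; rewrite /opopp ?A1 ?A2; [by rewrite opprD | by rewrite mulrN].
Qed.

Lemma linear_opmul A B : linear_op A -> linear_op B -> linear_op (opmul A B).
Proof.
move=> [A1 A2] [B1 B2]; split=> [f g a | c f a]; rewrite /opmul.
  have -> : B (fun b => f b + g b) = fun b => B f b + B g b.
    by apply: functional_extensionality_dep => b; rewrite B1.
  by rewrite A1.
have -> : B (fun b => c * f b) = fun b => c * B f b.
  by apply: functional_extensionality_dep => b; rewrite B2.
by rewrite A2.
Qed.

Lemma linear_opc c : linear_op (opc c).
Proof. by split=> *; rewrite /opc ?mulrDr // mulrCA. Qed.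

Definition linop0 : linop := exist _ _ linear_op0.
Definition linop1 : linop := exist _ _ linear_op1.
Definition linop_add (r s : linop) : linop :=
  exist _ _ (linear_opadd (svalP r) (svalP s)).
Definition linop_opp (r : linop) : linop := exist _ _ (linear_opopp (svalP r)).
Definition linop_mul (r s : linop) : linop :=
  exist _ _ (linear_opmul (svalP r) (svalP s)).

Lemma linop_addA : associative linop_add.
Proof. by move=> *; linop_ext; rewrite /= /opadd addrA. Qed.
Lemma linop_addC : commutative linop_add.
Proof. by move=> *; linop_ext; rewrite /= /opadd addrC. Qed.
Lemma linop_add0 : left_id linop0 linop_add.
Proof. by move=> *; linop_ext; rewrite /= /opadd /op0 add0r. Qed.
Lemma linop_addN : left_inverse linop0 linop_opp linop_add.
Proof. by move=> *; linop_ext; rewrite /= /opadd /opopp /op0 addNr. Qed.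
HB.instance Definition _ :=
  GRing.isZmodule.Build linop linop_addA linop_addC linop_add0 linop_addN.

Lemma linop_mulA : associative linop_mul. Proof. by move=> *; apply: linop_inj. Qed.
Lemma linop_mul1 : left_id linop1 linop_mul. Proof. by move=> *; apply: linop_inj. Qed.
Lemma linop_mulr1 : right_id linop1 linop_mul. Proof. by move=> *; apply: linop_inj. Qed.
Lemma linop_mulDl : left_distributive linop_mul linop_add.
Proof. by move=> *; apply: linop_inj. Qed.
Lemma linop_mulDr : right_distributive linop_mul linop_add.
Proof. by move=> [A [A1 A2]] *; linop_ext; rewrite /= /opmul /opadd A1. Qed.

Lemma linop1_neq0 : linop1 != 0.
Proof.
apply/eqP => /(congr1 (fun r : linop => sval r (fun _ => 1) (fun _ => 0%N))) /=.
by rewrite /op1 /op0; apply/eqP; rewrite oner_eq0.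
Qed.

HB.instance Definition _ := GRing.Zmodule_isNzRing.Build linop
  linop_mulA linop_mul1 linop_mulr1 linop_mulDl linop_mulDr linop1_neq0.

Lemma sval_exp (r : linop) k : sval (r ^+ k) = opexp (sval r) k.
Proof. by elim: k => [|k IHk] //; rewrite exprS /= IHk. Qed.

Lemma upd_same (a : nat -> nat) i : upd a i (a i) = a.
Proof. by apply: functional_extensionality_dep => j; rewrite /upd; case: eqP => // ->. Qed.

Lemma upd_upd (a : nat -> nat) i m k : upd (upd a i m) i k = upd a i k.
Proof. by apply: functional_extensionality_dep => j; rewrite /upd; case: eqP. Qed.

Lemma updC (a : nat -> nat) i m k l : i != k -> upd (upd a i m) k l = upd (upd a k l) i m.
Proof.
move=> ik; apply: functional_extensionality_dep => j; rewrite /upd.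
by case: (eqVneq j k) => [->|//]; rewrite eq_sym (negbTE ik).
Qed.

Lemma upd_eq (a : nat -> nat) i m : upd a i m i = m.
Proof. by rewrite /upd eqxx. Qed.

Lemma upd_neq (a : nat -> nat) i m k : k != i -> upd a i m k = a k.
Proof. by rewrite /upd => /negbTE ->. Qed.

Lemma linear_opx i : linear_op (@opx K i).
Proof. by split=> f g a; rewrite /opx; case: (a i); rewrite ?addr0 ?mulr0. Qed.

Lemma linear_opy i : linear_op (@opy K i).
Proof. by []. Qed.

Definition X i : linop := exist _ _ (linear_opx i).
Definition Y i : linop := exist _ _ (linear_opy i).
Definition scal c : linop := exist _ _ (linear_opc c).

Lemma mulYX i : Y i * X i = 1.
Proof. by linop_ext; rewrite /= /opmul /opy /opx /op1 upd_eq upd_upd upd_same. Qed.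

Lemma comm_XX i k : GRing.comm (X i) (X k).
Proof.
have [-> | ik] := eqVneq i k; first exact: commr_refl.
linop_ext; rewrite /= /opmul /opx.
case Ei: (a i) => [|p]; case Ek: (a k) => [|q]; rewrite ?upd_neq ?Ei ?Ek //;
  try by rewrite eq_sym.
by rewrite updC.
Qed.

Lemma comm_XY i k : i != k -> GRing.comm (X i) (Y k).
Proof.
move=> ik; linop_ext; rewrite /= /opmul /opx /opy upd_neq //.
by case: (a i) => [|p] //; rewrite upd_neq 1?eq_sym // updC.
Qed.

Lemma comm_YY i k : GRing.comm (Y i) (Y k).
Proof.
have [-> | ik] := eqVneq i k; first exact: commr_refl.
by linop_ext; rewrite /= /opmul /opy upd_neq 1?eq_sym // upd_neq // updC.
Qed.

Lemma comm_scal c (r : linop) : GRing.comm (scal c) r.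
Proof. by case: r => A [A1 A2]; linop_ext; rewrite /= /opmul /opc A2. Qed.

Lemma scalM c d : scal (c * d) = scal c * scal d.
Proof. by linop_ext; rewrite /= /opmul /opc mulrA. Qed.
Lemma scalD c d : scal (c + d) = scal c + scal d.
Proof. by linop_ext; rewrite /= /opadd /opc mulrDl. Qed.
Lemma scalB c d : scal (c - d) = scal c - scal d.
Proof. by linop_ext; rewrite /= /opadd /opopp /opc mulrBl. Qed.
Lemma scal1 : scal 1 = 1.
Proof. by linop_ext; rewrite /= /opc mul1r. Qed.
Lemma scal0 : scal 0 = 0.
Proof. by linop_ext; rewrite /= /opc mul0r. Qed.

Lemma scal_idem_inv a b (P : linop) : P * P = P -> a + b + a * b = 0 ->
  (1 + scal a * P) * (1 + scal b * P) = 1.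
Proof.
move=> PP ab; rewrite mulrDl mul1r mulrDr mulr1 -mulrA (mulrA P) -(comm_scal b P).
rewrite -mulrA PP mulrA -scalM -addrA -!mulrDl -!scalD addrA (addrC b) ab.
by rewrite scal0 mul0r addr0.
Qed.

(** * Matrix units *)

Definition Emx s t i : linop := X i ^+ s * Y i ^+ t - X i ^+ s.+1 * Y i ^+ t.+1.
Definition e i : linop := Emx 0 0 i.

Lemma sval_Emx s t i : sval (Emx s t i) = Est s t i.
Proof. by rewrite /Emx /Est /= !sval_exp. Qed.

Lemma sval_e i : sval (e i) = @ee K i.
Proof. exact: sval_Emx. Qed.

Lemma eE i : e i = 1 - X i * Y i.
Proof. by rewrite /e /Emx !expr1 !expr0 mulr1. Qed.

Lemma EmxE s t i : Emx s t i = X i ^+ s * e i * Y i ^+ t.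
Proof. by rewrite /Emx eE mulrBr mulr1 mulrBl exprSr exprS !mulrA. Qed.

Lemma e_mulX i : e i * X i = 0.
Proof. by rewrite eE mulrBl mul1r -mulrA mulYX mulr1 subrr. Qed.

Lemma mulY_e i : Y i * e i = 0.
Proof. by rewrite eE mulrBr mulr1 mulrA mulYX mul1r subrr. Qed.

Lemma e_idem i : e i * e i = e i.
Proof. by rewrite {1}eE mulrBl mul1r -mulrA mulY_e mulr0 subr0. Qed.

Lemma mulYXn i t : Y i ^+ t * X i ^+ t = 1.
Proof.
elim: t => [|t IHt]; first by rewrite !expr0 mulr1.
by rewrite exprSr exprS -mulrA (mulrA (Y i)) mulYX mul1r.
Qed.

Lemma e_YX_e i t u : e i * (Y i ^+ t * X i ^+ u) * e i = if t == u then e i else 0.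
Proof.
case: (ltngtP t u) => [tu | ut | ->]; last by rewrite mulYXn mulr1 e_idem.
- have [m ->] : exists m, u = (t + m.+1)%N by exists (u - t.+1)%N; lia.
  rewrite exprD (mulrA (Y i ^+ t)) mulYXn mul1r.
  by rewrite exprS mulrA e_mulX !mul0r.
- have [m ->] : exists m, t = (m.+1 + u)%N by exists (t - u.+1)%N; lia.
  rewrite exprD -(mulrA (Y i ^+ m.+1)) mulYXn mulr1.
  by rewrite exprSr -!mulrA mulY_e !mulr0.
Qed.

Lemma EmxM s t u v i : Emx s t i * Emx u v i = if t == u then Emx s v i else 0.
Proof.
rewrite !EmxE.
have -> : X i ^+ s * e i * Y i ^+ t * (X i ^+ u * e i * Y i ^+ v)
  = X i ^+ s * (e i * (Y i ^+ t * X i ^+ u) * e i) * Y i ^+ v by rewrite !mulrA.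
by rewrite e_YX_e; case: eqP; rewrite ?mulr0 ?mul0r // !mulrA.
Qed.

Definition free_of i (r : linop) := GRing.comm r (X i) /\ GRing.comm r (Y i).

Lemma free_of0 i : free_of i 0.
Proof. by split; apply/commr_sym/commr0. Qed.

Lemma free_of1 i : free_of i 1.
Proof. by split; apply/commr_sym/commr1. Qed.

Lemma free_ofD i r s : free_of i r -> free_of i s -> free_of i (r + s).
Proof. by move=> [? ?] [? ?]; split; apply/commr_sym/commrD; apply/commr_sym. Qed.

Lemma free_ofM i r s : free_of i r -> free_of i s -> free_of i (r * s).
Proof. by move=> [? ?] [? ?]; split; apply/commr_sym/commrM; apply/commr_sym. Qed.

Lemma free_ofN i r : free_of i r -> free_of i (- r).
Proof. by move=> [? ?]; split; apply/commr_sym/commrN; apply/commr_sym. Qed.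

Lemma free_ofX i r k : free_of i r -> free_of i (r ^+ k).
Proof. by move=> [? ?]; split; apply/commr_sym/commrX; apply/commr_sym. Qed.

Lemma free_of_scal i c : free_of i (scal c).
Proof. by split; apply: comm_scal. Qed.

Lemma free_of_X i k : k != i -> free_of i (X k).
Proof. by move=> ki; split; [apply: comm_XX | apply: comm_XY]. Qed.

Lemma free_of_Y i k : k != i -> free_of i (Y k).
Proof. by move=> ki; split; [apply/commr_sym/comm_XY; rewrite eq_sym | apply: comm_YY]. Qed.

Lemma free_of_Emx i s t k : k != i -> free_of i (Emx s t k).
Proof.
move=> ki; apply: free_ofD; last apply: free_ofN; apply: free_ofM; apply: free_ofX;
  by [apply: free_of_X | apply: free_of_Y].
Qed.

Lemma comm_Emx i r s t : free_of i r -> GRing.comm r (Emx s t i).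
Proof. by move=> [cx cy]; apply: commrB; apply: commrM; apply: commrX. Qed.

Implicit Types P Q : pred nat.

Definition in_salg P (r : linop) := salg P (sval r).

Lemma in_salg_scal P c : in_salg P (scal c).
Proof. exact: salg_c. Qed.

Lemma in_salg1 P : in_salg P 1.
Proof.
have -> : (1 : linop) = scal 1 by rewrite scal1.
exact: in_salg_scal.
Qed.

Lemma in_salg0 P : in_salg P 0.
Proof.
have -> : (0 : linop) = scal 0 by rewrite scal0.
exact: in_salg_scal.
Qed.

Lemma in_salgD P r s : in_salg P r -> in_salg P s -> in_salg P (r + s).
Proof. exact: salg_add. Qed.

Lemma in_salgM P r s : in_salg P r -> in_salg P s -> in_salg P (r * s).
Proof. exact: salg_mul. Qed.

Lemma in_salgN P r : in_salg P r -> in_salg P (- r).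
Proof.
have -> : - r = scal (-1) * r by linop_ext; rewrite /= /opopp /opmul /opc mulN1r.
by apply: in_salgM; apply: in_salg_scal.
Qed.

Lemma in_salgX P r k : in_salg P r -> in_salg P (r ^+ k).
Proof.
move=> Pr; elim: k => [|k IHk]; first exact: in_salg1.
by rewrite exprS; apply: in_salgM.
Qed.

Lemma in_salg_X P i : P i -> in_salg P (X i).
Proof. exact: salg_x. Qed.

Lemma in_salg_Y P i : P i -> in_salg P (Y i).
Proof. exact: salg_y. Qed.

Lemma in_salg_Emx P s t i : P i -> in_salg P (Emx s t i).
Proof.
move=> Pi; apply: in_salgD; last apply: in_salgN; apply: in_salgM; apply: in_salgX;
  by [apply: in_salg_X | apply: in_salg_Y].
Qed.

Lemma salg_free_of P A : salg P A ->
  exists r : linop, sval r = A /\ forall i, ~~ P i -> free_of i r.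
Proof.
elim=> {A} [c | i Pi | i Pi | A B _ [r [<- Fr]] _ [s [<- Fs]]
  | A B _ [r [<- Fr]] _ [s [<- Fs]]].
- by exists (scal c); split=> // i _; apply: free_of_scal.
- exists (X i); split=> // k Pk; apply: free_of_X.
  by apply/eqP => ik; move: Pk; rewrite -ik Pi.
- exists (Y i); split=> // k Pk; apply: free_of_Y.
  by apply/eqP => ik; move: Pk; rewrite -ik Pi.
- by exists (r + s); split=> // i Pi; apply: free_ofD; [apply: Fr | apply: Fs].
- by exists (r * s); split=> // i Pi; apply: free_ofM; [apply: Fr | apply: Fs].
Qed.

Lemma salg_sub P Q (A : Op K) : (forall i, P i -> Q i) -> salg P A -> salg Q A.
Proof. by move=> PQ; elim=> {A} *; constructor; auto. Qed.

Lemma sval_prod (T : Type) (s : seq T) (F : T -> linop) :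
  sval (\prod_(i <- s) F i) = foldr (fun i acc => opmul (sval (F i)) acc) (@op1 K) s.
Proof. by elim: s => [|i s IHs]; rewrite ?big_nil ?big_cons //= IHs. Qed.

End LinearOperators.

Section RingFacts.
Variable R : nzRingType.

Lemma big_prod_rem (T : eqType) (s : seq T) (F : T -> R) i : i \in s ->
    (forall j, j \in s -> j != i -> GRing.comm (F j) (F i)) ->
  \prod_(j <- s) F j = F i * \prod_(j <- rem i s) F j.
Proof.
elim: s => [|a s IHs] //= ias cF; rewrite !big_cons.
have [-> // | ai] := eqVneq a i; rewrite big_cons.
have is' : i \in s by move: ias; rewrite inE eq_sym (negbTE ai).
rewrite IHs //; last by move=> j js; apply: cF; rewrite inE js orbT.
by rewrite !mulrA cF // inE eqxx.
Qed.

Lemma big_prod_idem (T : eqType) (s : seq T) (F : T -> R) :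
    (forall j, j \in s -> F j * F j = F j) ->
    (forall i j, i \in s -> j \in s -> GRing.comm (F i) (F j)) ->
  (\prod_(j <- s) F j) * (\prod_(j <- s) F j) = \prod_(j <- s) F j.
Proof.
elim: s => [|a s IHs] Fid cF; first by rewrite big_nil mulr1.
have cFa : GRing.comm (F a) (\prod_(j <- s) F j).
  by rewrite big_seq; apply: big_ind => [|u v|j js]; [exact: commr1 | exact: commrM
    | apply: cF; rewrite inE ?eqxx ?js ?orbT].
rewrite big_cons -mulrA (mulrA (\prod_(j <- s) F j)) -cFa -!mulrA (mulrA (F a)).
rewrite Fid ?inE ?eqxx // IHs // => [j js | i j iS jS].
  by apply: Fid; rewrite inE js orbT.
by apply: cF; rewrite inE ?iS ?jS orbT.
Qed.

Lemma sqr0_inv (P : R) : P * P = 0 -> (1 + P) * (1 - P) = 1 /\ (1 - P) * (1 + P) = 1.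
Proof.
move=> PP; split; first by rewrite mulrBr mulr1 mulrDl mul1r PP addr0 addrK.
by rewrite mulrDr mulr1 mulrBl mul1r PP subr0 subrK.
Qed.

Lemma commutator_sqr0 (P Q : R) : P * P = 0 -> Q * Q = 0 -> Q * P = 0 ->
  (1 + P) * (1 + Q) * (1 - P) * (1 - Q) = 1 + P * Q.
Proof.
move=> PP QQ QP.
have -> : (1 + P) * (1 + Q) = 1 + Q + P + P * Q.
  by rewrite mulrDl mul1r mulrDr mulr1 !addrA.
have -> : (1 + Q + P + P * Q) * (1 - P) = 1 + Q + P * Q.
  rewrite mulrBr mulr1 !mulrDl mul1r QP PP -mulrA QP mulr0 !addr0.
  by rewrite addrAC addrK.
rewrite mulrBr mulr1 !mulrDl mul1r QQ -mulrA QQ mulr0 !addr0.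
by rewrite addrAC addrK.
Qed.

End RingFacts.

(** * Two-by-two blocks of matrix units *)

Section BlockMatrices.
Variable R : nzRingType.
Variable E : nat -> nat -> R.
Variable scalar : R -> Prop.
Hypothesis EM : forall k l u w, E k l * E u w = if l == u then E k w else 0.
Hypothesis comm_scalar_E : forall y k l, scalar y -> GRing.comm y (E k l).

(* [blk a b c d] is the operator acting as the matrix [[a, b], [c, d]] on the
   span of the first two matrix units and as the identity on the rest. *)
Definition blk_rest : R := 1 - E 0 0 - E 1 1.
Definition blk (a b c d : R) : R :=
  blk_rest + ((a * E 0 0 + b * E 0 1) + (c * E 1 0 + d * E 1 1)).

Lemma mulrE_mulrE (x y : R) k l k' l' : scalar y ->
  (x * E k l) * (y * E k' l') = (x * y) * (if l == k' then E k l' else 0).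
Proof.
by move=> Sy; rewrite -mulrA (mulrA (E k l)) -(comm_scalar_E _ _ Sy) -!mulrA EM.
Qed.

Lemma blk_rest_mulE k l : (k <= 1)%N -> blk_rest * E k l = 0.
Proof.
rewrite /blk_rest !mulrBl mul1r !EM; case: k => [|[|]] //= _.
  by rewrite subrr subr0.
by rewrite subr0 subrr.
Qed.

Lemma E_mul_blk_rest k l : (l <= 1)%N -> E k l * blk_rest = 0.
Proof.
rewrite /blk_rest !mulrBr mulr1 !EM; case: l => [|[|]] //= _.
  by rewrite subrr subr0.
by rewrite subr0 subrr.
Qed.

Lemma blk_rest_idem : blk_rest * blk_rest = blk_rest.
Proof. by rewrite {1}/blk_rest !mulrBl mul1r !E_mul_blk_rest // !subr0. Qed.

Lemma blk_rest_mul (y : R) k l : (k <= 1)%N -> scalar y -> blk_rest * (y * E k l) = 0.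
Proof.
move=> k1 Sy.
have cy : GRing.comm y blk_rest.
  by apply: commrB; [apply: commrB; [apply: commr1|]|]; apply: comm_scalar_E.
by rewrite mulrA -cy -mulrA blk_rest_mulE // mulr0.
Qed.

Lemma mul_blk_rest (x : R) k l : (l <= 1)%N -> (x * E k l) * blk_rest = 0.
Proof. by move=> l1; rewrite -mulrA E_mul_blk_rest // mulr0. Qed.

Lemma row_mul (x y a' b' c' d' : R) k :
  scalar a' -> scalar b' -> scalar c' -> scalar d' ->
  (x * E k 0 + y * E k 1) * ((a' * E 0 0 + b' * E 0 1) + (c' * E 1 0 + d' * E 1 1))
  = (x * a' + y * c') * E k 0 + (x * b' + y * d') * E k 1.
Proof.
move=> Sa Sb Sc Sd.
rewrite mulrDl !mulrDr !mulrE_mulrE //= !mulr0 !addr0 !add0r.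
by rewrite addrACA -!mulrDl.
Qed.

Lemma blk_mul a b c d a' b' c' d' :
  scalar a' -> scalar b' -> scalar c' -> scalar d' ->
  blk a b c d * blk a' b' c' d' =
  blk (a * a' + b * c') (a * b' + b * d') (c * a' + d * c') (c * b' + d * d').
Proof.
move=> Sa Sb Sc Sd.
rewrite /blk mulrDl (mulrDr blk_rest blk_rest) blk_rest_idem.
rewrite !(mulrDr blk_rest) !blk_rest_mul // !addr0.
have sum_rest x y z w :
    ((x * E 0 0 + y * E 0 1) + (z * E 1 0 + w * E 1 1)) * blk_rest = 0.
  by rewrite !mulrDl !mul_blk_rest // !addr0.
by rewrite (mulrDr _ blk_rest) sum_rest add0r (mulrDl (a * E 0 0 + _)) !row_mul.
Qed.

Lemma blk01 t : blk 1 t 0 1 = 1 + t * E 0 1.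
Proof.
rewrite /blk /blk_rest !mul1r mul0r add0r -!addrA; congr (1 + _).
by rewrite (addrCA (- E 1 1)) addKr (addrC (t * E 0 1)) addKr.
Qed.

Lemma blk10 t : blk 1 0 t 1 = 1 + t * E 1 0.
Proof.
rewrite /blk /blk_rest !mul1r mul0r addr0 -!addrA; congr (1 + _).
by rewrite (addrCA (- E 1 1)) addKr (addrC (t * E 1 0)) addKr.
Qed.

Lemma blk1 : blk 1 0 0 1 = 1.
Proof. by rewrite blk01 mul0r addr0. Qed.

Lemma blk_diag1 a : blk a 0 0 1 = 1 + (a - 1) * E 0 0.
Proof.
rewrite /blk /blk_rest !mul1r !mul0r addr0 add0r -!addrA mulrBl mul1r; congr (1 + _).
by rewrite (addrC (a * E 0 0)) addKr addrC.
Qed.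

Hypothesis scalar1 : scalar 1.
Hypothesis scalar0 : scalar 0.
Hypothesis scalarD : forall a b, scalar a -> scalar b -> scalar (a + b).
Hypothesis scalarM : forall a b, scalar a -> scalar b -> scalar (a * b).
Hypothesis scalarN : forall a, scalar a -> scalar (- a).

Ltac scalar_tac := repeat first [ assumption | apply: scalar1 | apply: scalar0
  | apply: scalarD | apply: scalarM | apply: scalarN ].
Ltac blk_simpl :=
  rewrite ?mul1r ?mulr1 ?mul0r ?mulr0 ?addr0 ?add0r ?mulN1r ?mulrN1 ?mulNr ?mulrN ?opprK.

Lemma blk01_inv t : scalar t ->
  blk 1 t 0 1 * blk 1 (- t) 0 1 = 1 /\ blk 1 (- t) 0 1 * blk 1 t 0 1 = 1.
Proof. by move=> St; rewrite !blk_mul; try scalar_tac; blk_simpl; rewrite addNr subrr blk1. Qed.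

Lemma blk10_inv t : scalar t ->
  blk 1 0 t 1 * blk 1 0 (- t) 1 = 1 /\ blk 1 0 (- t) 1 * blk 1 0 t 1 = 1.
Proof. by move=> St; rewrite !blk_mul; try scalar_tac; blk_simpl; rewrite addNr subrr blk1. Qed.

Section Whitehead.
Variables x y c c' : R.
Hypotheses (yx : y * x = 1) (cx : GRing.comm c x) (cy : GRing.comm c y).
Hypotheses (Sx : scalar x) (Sy : scalar y) (Sc : scalar c) (Sc' : scalar c').
Hypotheses (cc' : (1 + c) * (1 + c') = 1) (c'c : (1 + c') * (1 + c) = 1).

Lemma blk_diag_inv : blk 1 0 0 (1 + c) * blk 1 0 0 (1 + c') = 1 /\
  blk 1 0 0 (1 + c') * blk 1 0 0 (1 + c) = 1.
Proof. by rewrite !blk_mul; try scalar_tac; blk_simpl; rewrite cc' c'c blk1. Qed.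

Lemma blk01_commutator t : scalar t ->
  blk 1 t 0 1 * blk 1 0 0 (1 + c) * blk 1 (- t) 0 1 * blk 1 0 0 (1 + c')
  = blk 1 (t * c * (1 + c')) 0 1.
Proof.
move=> St; rewrite !blk_mul; try scalar_tac; congr blk; blk_simpl => //.
  by rewrite mul1r (mulrDr t) mulr1 addKr.
by rewrite mul0r oppr0 add0r cc'.
Qed.

Lemma blk10_commutator t : scalar t ->
  blk 1 0 t 1 * blk 1 0 0 (1 + c) * blk 1 0 (- t) 1 * blk 1 0 0 (1 + c')
  = blk 1 0 (- (c * t)) 1.
Proof.
move=> St; rewrite !blk_mul; try scalar_tac; congr blk; blk_simpl => //.
- by rewrite mul0r subr0.
- by rewrite mul0r.
- by rewrite mulrDl mul1r opprD addNKr.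
Qed.

Lemma whitehead_step1 :
  blk 1 (-1) 0 1 * blk 1 0 0 (1 + c) * blk 1 1 0 1 = blk 1 (- c) 0 (1 + c).
Proof.
rewrite !blk_mul; try scalar_tac; congr blk; blk_simpl => //.
by rewrite opprD addNKr.
Qed.

Lemma whitehead_step2 :
  blk 1 0 1 1 * blk 1 (- c) 0 (1 + c) * blk 1 0 (-1) 1 = blk (1 + c) (- c) 0 1.
Proof.
have Nc : - c + (1 + c) = 1 by rewrite addrCA addNr addr0.
by rewrite !blk_mul; try scalar_tac; congr blk; blk_simpl; rewrite ?Nc ?subrr.
Qed.

Lemma whitehead_step3 :
  blk 1 (-1) 0 1 * blk (1 + c) (- c) 0 1 * blk 1 1 0 1 = blk (1 + c) 0 0 1.
Proof.
rewrite !blk_mul; try scalar_tac; congr blk; blk_simpl => //.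
by rewrite -opprD (addrC c) subrr.
Qed.

Lemma whitehead_step4 :
  blk 1 x 0 1 * blk (1 + c) 0 0 1 * blk 1 (- x) 0 1 = blk (1 + c) (- (c * x)) 0 1.
Proof.
rewrite !blk_mul; try scalar_tac; congr blk; blk_simpl => //.
  by rewrite mulrDl mul1r opprD addrAC addNr add0r.
by rewrite mul0r oppr0 add0r.
Qed.

Lemma whitehead_step5 :
  blk 1 0 (- y) 1 * blk (1 + c) (- (c * x)) 0 1 * blk 1 0 y 1 =
  blk (1 + c * (1 - x * y)) (- (c * x)) 0 (1 + c).
Proof.
have ycx : y * (c * x) = c by rewrite mulrA -cy -mulrA yx mulr1.
rewrite !blk_mul; try scalar_tac; congr blk; blk_simpl => //.
- by rewrite mulrBr mulr1 addrA mulrA.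
- by rewrite ycx mulrDl mul1r mulrDr mulr1 cy (addrC (y * c)) addNr.
- by rewrite ycx addrC.
Qed.

Lemma whitehead_step6 :
  blk 1 x 0 1 * blk (1 + c * (1 - x * y)) (- (c * x)) 0 (1 + c) * blk 1 (- x) 0 1 =
  blk (1 + c * (1 - x * y)) 0 0 (1 + c).
Proof.
have ex : (1 - x * y) * x = 0 by rewrite mulrBl mul1r -mulrA yx mulr1 subrr.
rewrite !blk_mul; try scalar_tac; congr blk; blk_simpl => //.
  rewrite mulrDl mul1r -mulrA ex mulr0 addr0 mulrDr mulr1 -cx.
  by rewrite (addrC x (c * x)) addKr addNr.
by rewrite mul0r oppr0 add0r.
Qed.

Lemma blk_diag_mul_inv :
  blk (1 + c * (1 - x * y)) 0 0 (1 + c) * blk 1 0 0 (1 + c') =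
  blk (1 + c * (1 - x * y)) 0 0 1.
Proof. by rewrite !blk_mul; try scalar_tac; congr blk; blk_simpl. Qed.

End Whitehead.

End BlockMatrices.

Section Subgroups.
Variable K : fieldType.
Local Notation Op := (Op K).
Local Notation opmul := (@opmul K).
Local Notation op1 := (@op1 K).
Implicit Types (X Y H : Op -> Prop) (g h x y z : Op).

Definition unitop x := exists y, opmul x y = op1 /\ opmul y x = op1.

Definition conj_gens (G H : Op -> Prop) z := exists g gi h,
  G g /\ opmul g gi = op1 /\ opmul gi g = op1 /\ H h /\ z = opmul g (opmul h gi).

Lemma subgrp_gen X x : X x -> subgrp X x.
Proof. exact: sg_mul (sg1 X). Qed.

Lemma subgrp_mul X g h : subgrp X g -> subgrp X h -> subgrp X (opmul g h).
Proof.
move=> Xg Xh; elim: Xg => {g} // [g x _ IHg Xx | g x y _ IHg Xx xy yx].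
  exact: sg_mul IHg Xx.
exact: sg_mulinv IHg Xx xy yx.
Qed.

Lemma subgrp_unit X g : (forall x, X x -> unitop x) -> subgrp X g ->
  exists2 h, subgrp X h & opmul g h = op1 /\ opmul h g = op1.
Proof.
move=> Xunit; elim=> {g} [| g x _ [h Xh [gh hg]] Xx | g x y _ [h Xh [gh hg]] Xx xy yx].
- by exists op1; first exact: sg1.
- have [y [xy yx]] := Xunit _ Xx.
  exists (opmul h y); first by apply: subgrp_mul => //; apply: sg_mulinv (sg1 X) Xx xy yx.
  split; first by change (opmul x (opmul (opmul g h) y) = op1); rewrite gh.
  by change (opmul h (opmul (opmul y x) g) = op1); rewrite yx.
- exists (opmul h x); first by apply: subgrp_mul => //; apply: subgrp_gen.
  split; first by change (opmul y (opmul (opmul g h) x) = op1); rewrite gh.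
  by change (opmul h (opmul (opmul x y) g) = op1); rewrite xy.
Qed.

Lemma subgrp_inv X g h : (forall x, X x -> unitop x) -> subgrp X g ->
  opmul h g = op1 -> subgrp X h.
Proof.
move=> Xunit Xg hg; have [h' Xh' [gh' _]] := subgrp_unit Xunit Xg.
suff -> : h = h' by [].
have hh' : opmul h (opmul g h') = opmul (opmul h g) h' by [].
by rewrite gh' hg in hh'.
Qed.

Lemma subgrp_sub X Y : (forall y, Y y -> unitop y) -> (forall x, X x -> subgrp Y x) ->
  forall g, subgrp X g -> subgrp Y g.
Proof.
move=> Yunit XY g; elim=> {g} [| g x _ IHg Xx | g x y _ IHg Xx _ yx].
- exact: sg1.
- exact: subgrp_mul (XY _ Xx) IHg.
- exact: subgrp_mul (subgrp_inv Yunit (XY _ Xx) yx) IHg.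
Qed.

Lemma subgrp_conj X g gi : opmul g gi = op1 -> opmul gi g = op1 ->
    (forall x, X x -> X (opmul g (opmul x gi))) ->
  forall z, subgrp X z -> subgrp X (opmul g (opmul z gi)).
Proof.
move=> ggi gig Xconj z; elim=> {z} [| z x _ IHz Xx | z x y _ IHz Xx xy yx].
- by change (subgrp X (opmul g gi)); rewrite ggi; apply: sg1.
- have -> : opmul g (opmul (opmul x z) gi) =
      opmul (opmul g (opmul x gi)) (opmul g (opmul z gi)).
    by rewrite -[opmul (opmul g _) _]/(opmul g (opmul x (opmul (opmul gi g) (opmul z gi)))) gig.
  exact: sg_mul IHz (Xconj _ Xx).
- have conj_mul u v : opmul (opmul g (opmul u gi)) (opmul g (opmul v gi)) =
      opmul g (opmul (opmul u v) gi).
    by rewrite -[LHS]/(opmul g (opmul u (opmul (opmul gi g) (opmul v gi)))) gig.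
  rewrite -conj_mul; apply: sg_mulinv IHz (Xconj _ Xx) _ _.
    by rewrite conj_mul xy.
  by rewrite conj_mul yx.
Qed.

Lemma conj_gens_conj X H g gi x : subgrp X g -> opmul g gi = op1 -> opmul gi g = op1 ->
  conj_gens (subgrp X) H x -> conj_gens (subgrp X) H (opmul g (opmul x gi)).
Proof.
move=> Xg ggi gig [g' [g'i [h [Xg' [g'g'i [g'ig' [Hh ->]]]]]]].
exists (opmul g g'), (opmul g'i gi), h; split; first exact: subgrp_mul.
split; first by rewrite -[LHS]/(opmul g (opmul (opmul g' g'i) gi)) g'g'i.
split; last by [].
by rewrite -[LHS]/(opmul g'i (opmul (opmul gi g) g')) gig.
Qed.

Lemma unitop_conj g gi h : opmul g gi = op1 -> opmul gi g = op1 -> unitop h ->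
  unitop (opmul g (opmul h gi)).
Proof.
move=> ggi gig [h' [hh' h'h]]; exists (opmul g (opmul h' gi)).
split; [rewrite -[LHS]/(opmul g (opmul h (opmul (opmul gi g) (opmul h' gi)))) gig
       | rewrite -[LHS]/(opmul g (opmul h' (opmul (opmul gi g) (opmul h gi)))) gig].
  by rewrite -[opmul g _]/(opmul g (opmul (opmul h h') gi)) hh'.
by rewrite -[opmul g _]/(opmul g (opmul (opmul h' h) gi)) h'h.
Qed.

End Subgroups.

Lemma card_gt2_avoid (T : finType) (A : {set T}) a b : (2 < #|A|)%N ->
  exists2 j, j \in A & (j != a) && (j != b).
Proof.
move=> A2; have : (0 < #|A :\: [set a; b]|)%N.
  have : (#|A :&: [set a; b]| <= 2)%N.
    by apply: leq_trans (subset_leq_card (subsetIr _ _)) _; rewrite cards2; case: (a != b).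
  by rewrite cardsD; lia.
by case/card_gt0P => j; rewrite !inE negb_or => /andP [ab jA]; exists j.
Qed.

Lemma mem_rem_enum (T : finType) (A : {set T}) a i :
  (i \in rem a (enum A)) = (i != a) && (i \in A).
Proof. by rewrite mem_rem_uniq ?enum_uniq // inE mem_enum. Qed.

Section MatrixUnitProducts.
Variables (K : fieldType) (n : nat).
Local Notation linop := (linop K).
Local Notation Emx := (@Emx K).
Implicit Types (xs : seq 'I_n) (al be : 'I_n -> nat).

Local Notation prod_Emx xs al be := (\prod_(j <- xs) Emx (al j) (be j) j).

Lemma comm_Emx_neq (i j : nat) s t u v : j != i -> GRing.comm (Emx s t j) (Emx u v i).
Proof. by move=> ji; apply/comm_Emx/free_of_Emx. Qed.

Lemma prod_Emx_rem xs al be i : i \in xs ->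
  prod_Emx xs al be = Emx (al i) (be i) i * prod_Emx (rem i xs) al be.
Proof. by move=> ixs; apply: big_prod_rem => // j _ ji; apply: comm_Emx_neq. Qed.

Lemma free_of_prod_Emx k xs al be : (forall j, j \in xs -> (j : nat) != k) ->
  free_of k (prod_Emx xs al be).
Proof.
move=> xsk; rewrite big_seq; apply: big_ind => [|r t|j js]; first exact: free_of1.
  exact: free_ofM.
exact/free_of_Emx/xsk.
Qed.

Lemma in_salg_prod_Emx (P : pred nat) xs al be : (forall j, j \in xs -> P j) ->
  in_salg P (prod_Emx xs al be).
Proof.
move=> xsP; rewrite big_seq; apply: big_ind => [|r t|j js]; first exact: in_salg1.
  exact: in_salgM.
exact/in_salg_Emx/xsP.
Qed.

Lemma prod_Emx_absorb xs al be j : uniq xs -> j \in xs -> al j != be j ->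
  Emx (be j) (be j) j * prod_Emx xs al be = 0 /\
  prod_Emx xs al be * Emx (be j) (be j) j = prod_Emx xs al be.
Proof.
move=> uxs jxs abj; rewrite (prod_Emx_rem al be jxs).
have Fj : free_of j (prod_Emx (rem j xs) al be).
  by apply: free_of_prod_Emx => i; rewrite mem_rem_uniq // inE => /andP [].
split; first by rewrite mulrA (EmxM K (be j)) eq_sym (negbTE abj) mul0r.
by rewrite -mulrA (comm_Emx _ _ Fj) mulrA (EmxM K (al j)) eqxx.
Qed.

Lemma Eab_prod (I : {set 'I_n}) al be : Eab I al be = sval (prod_Emx (enum I) al be).
Proof.
rewrite sval_prod /Eab /prodI; congr foldr.
by apply: funext => i; apply: funext => acc; rewrite sval_Emx.
Qed.

Lemma EI_prod (I : {set 'I_n}) : EI I = sval (\prod_(j <- enum I) Emx 0 0 j).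
Proof. by rewrite sval_prod /EI /prodI; congr foldr. Qed.

Lemma EI_split (I : {set 'I_n}) (a b : 'I_n) : a \in I -> b \in I -> b != a ->
  EI I = sval (\prod_(i <- rem b (rem a (enum I))) Emx 0 0 i * e K b * Emx 0 0 a).
Proof.
move=> aI bI ba; rewrite EI_prod (prod_Emx_rem _ _ (_ : a \in enum I)) ?mem_enum //.
rewrite (prod_Emx_rem _ _ (_ : b \in rem a (enum I))) ?mem_rem_enum ?ba //.
set P := \prod_(i <- _) _.
have Fb : free_of b P.
  by apply: free_of_prod_Emx => i; rewrite mem_rem_uniq ?rem_uniq ?enum_uniq // inE => /andP [].
have Fa : free_of a P.
  by apply: free_of_prod_Emx => i /mem_rem; rewrite mem_rem_enum => /andP [].
rewrite (comm_Emx _ _ Fb); congr sval; symmetry.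
by apply/comm_Emx/free_ofM/Fa; apply: free_of_Emx.
Qed.

End MatrixUnitProducts.

Lemma inI_mem n (I : {set 'I_n}) (j : 'I_n) : j \in I -> inI I j.
Proof. by move=> jI; apply/existsP; exists j; rewrite jI eqxx. Qed.

(** * The relative elementary group *)

Section RelativeElementaryGroup.
Variables (K : fieldType) (n : nat) (S : {set 'I_n}).
Hypothesis S_lt : forall i : 'I_n, i \in S -> (i < n.-1)%N.
Local Notation linop := (linop K).
Local Notation Emx := (@Emx K).
Local Notation N := (lastv n).
Local Notation in_Snm1 := (in_salg (fun i => (i < n.-1)%N)).
Implicit Types a r s g gi z : linop.

Definition p_rel : Op K -> Prop :=
  ideal_sum (fun i => exists2 j, j \in S & (j : nat) = i) (@pprime K n).

Definition in_p (r : linop) := p_rel (sval r).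
Definition in_Erel (r : linop) := Erel n p_rel (sval r).
Definition in_Einf (r : linop) := Einf n (sval r).

Lemma p_rel_Snm1 A : p_rel A -> Snm1 n A.
Proof.
elim=> {A} [| i A [j jS <-] | A B _ SA _ SB]; last exact: salg_add.
  exact: (in_salg0 K).
elim=> {A} [| a g b Sa <- Sb | A B _ SA _ SB]; last exact: salg_add.
  exact: (in_salg0 K).
by apply: salg_mul => //; apply: salg_mul => //; rewrite -sval_e; apply/in_salg_Emx/S_lt.
Qed.

Lemma in_p_mul_e i r s : i \in S -> in_Snm1 r -> in_Snm1 s -> in_p (r * e K i * s).
Proof.
move=> iS Sr Ss; apply: (is_in (i := i)); first by exists i.
by rewrite -[sval _]/(opmul (sval r) (opmul (sval (e K i)) (sval s))) sval_e; apply: ig_gen.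
Qed.

Lemma Snm1_free_of_last r : in_Snm1 r -> free_of N r.
Proof.
move=> /salg_free_of [r' [r'r Fr']]; rewrite -(linop_inj r'r).
by apply: Fr'; rewrite /lastv ltnn.
Qed.

Lemma Emx_last_sqr0 a k l : k != l -> free_of N a ->
  (a * Emx k l N) * (a * Emx k l N) = 0.
Proof.
move=> kl Fa; rewrite -mulrA (mulrA (Emx k l N)) -(comm_Emx _ _ Fa) -!mulrA EmxM.
by rewrite eq_sym (negbTE kl) !mulr0.
Qed.

Lemma in_Einf_gen a k l : k != l -> in_Snm1 a -> in_Einf (1 + a * Emx k l N).
Proof.
move=> kl Sa; apply: subgrp_gen; exists (sval a), k, l.
by rewrite -sval_Emx; split; [| split; [apply/eqP |]].
Qed.

Lemma in_Erel_gen a k l : k != l -> in_p a -> in_Erel (1 + a * Emx k l N).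
Proof.
move=> kl pa; apply: subgrp_gen; exists (@op1 K), (@op1 K), (sval (1 + a * Emx k l N)).
split; first exact: sg1.
do 2 (split; first by []); split; last by [].
by exists (sval a), k, l; rewrite -sval_Emx; split; [| split; [apply/eqP |]].
Qed.

Lemma unitop_sval (r s : linop) : r * s = 1 -> s * r = 1 -> unitop (sval r).
Proof. by move=> /(congr1 sval) rs /(congr1 sval) sr; exists (sval s). Qed.

Lemma Erel_gens_unit x : conj_gens (Einf n) (Einf_gen n p_rel) x -> unitop x.
Proof.
move=> [g [gi [h [_ [ggi [gig [[a [k [l [pa [kl ->]]]]] ->]]]]]]].
apply: unitop_conj ggi gig _.
have /salg_free_of [r [<- Fr]] := p_rel_Snm1 pa.
have FrN : free_of N r by apply: Fr; rewrite /lastv ltnn.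
have [rE Er] := sqr0_inv (Emx_last_sqr0 (introN eqP kl) FrN).
by rewrite -sval_Emx; apply: unitop_sval rE Er.
Qed.

Lemma in_ErelM r s : in_Erel r -> in_Erel s -> in_Erel (r * s).
Proof. exact: subgrp_mul. Qed.

Lemma in_Erel_inv r s : in_Erel r -> s * r = 1 -> in_Erel s.
Proof. by move=> Er /(congr1 sval) sr; apply: subgrp_inv Erel_gens_unit Er sr. Qed.

Lemma in_Erel_conj z g gi : in_Erel z -> in_Einf g -> g * gi = 1 -> gi * g = 1 ->
  in_Erel (g * z * gi).
Proof.
move=> Ez Eg /(congr1 sval) ggi /(congr1 sval) gig.
change (Erel n p_rel (opmul (sval g) (opmul (sval z) (sval gi)))).
apply: (@subgrp_conj K (conj_gens (Einf n) (Einf_gen n p_rel)) _ _ ggi gig) Ez => x.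
exact: conj_gens_conj.
Qed.

(* [1 + b E_kk(n)] is the commutator of [1 + b E_{k,k+1}(n)] and
   [1 + f E_{k+1,k}(n)]. *)
Lemma in_Erel_commutator_diag b f k : in_p b -> in_Snm1 f -> free_of N f ->
  f * b = 0 -> b * f = b -> in_Erel (1 + b * Emx k k N).
Proof.
move=> pb Sf Ff fb bf; have Fb := Snm1_free_of_last (p_rel_Snm1 pb).
have kk : k != k.+1 by rewrite neq_ltn ltnSn.
set P := b * Emx k k.+1 N; set Q := f * Emx k.+1 k N.
have PP : P * P = 0 := Emx_last_sqr0 kk Fb.
have QQ : Q * Q = 0 by apply: Emx_last_sqr0; rewrite // eq_sym.
have QP : Q * P = 0.
  by rewrite /Q /P mulrA -(mulrA f) -(comm_Emx _ _ Fb) (mulrA f) fb !mul0r.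
have PQ : P * Q = b * Emx k k N.
  by rewrite /P /Q mulrA -(mulrA b) -(comm_Emx _ _ Ff) (mulrA b) bf -mulrA EmxM eqxx.
have [PiP PPi] := sqr0_inv PP; have [QiQ QQi] := sqr0_inv QQ.
rewrite -PQ -(commutator_sqr0 PP QQ QP) -!mulrA [X in _ * X]mulrA.
apply: in_ErelM; first exact: in_Erel_gen.
apply: (in_Erel_conj _ _ QiQ QQi); last by apply: in_Einf_gen; rewrite // eq_sym.
exact: in_Erel_inv (in_Erel_gen kk pb) PPi.
Qed.

Lemma in_p_prod_Emx r s (xs : seq 'I_n) al be i : i \in S -> i \in xs ->
    (forall j, j \in xs -> (j < n.-1)%N) -> in_Snm1 r -> in_Snm1 s ->
  in_p (r * \prod_(j <- xs) Emx (al j) (be j) j * s).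
Proof.
move=> iS ixs xs_lt Sr Ss; rewrite (prod_Emx_rem K al be ixs) EmxE !mulrA.
rewrite -(mulrA _ (Y K i ^+ be i)) -(mulrA _ (Y K i ^+ be i * _)).
apply: in_p_mul_e => //; first by apply/in_salgM/in_salgX/in_salg_X/S_lt.
apply/in_salgM/Ss/in_salgM; first exact/in_salgX/in_salg_Y/S_lt.
by apply: in_salg_prod_Emx => j /mem_rem; apply: xs_lt.
Qed.

Lemma lt_lastv (j : 'I_n) : (j : nat) != N -> (j < n.-1)%N.
Proof. by have := ltn_ord j; rewrite /lastv; lia. Qed.

Lemma in_Erel_mul_prod_Emx r (xs : seq 'I_n) al be k l : uniq xs ->
    (forall j, j \in xs -> (j < n.-1)%N) -> (forall j, j \in xs -> free_of j r) ->
    in_p (r * \prod_(j <- xs) Emx (al j) (be j) j) ->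
    (k != l) || has (fun j => al j != be j) xs ->
  in_Erel (1 + r * \prod_(j <- xs) Emx (al j) (be j) j * Emx k l N).
Proof.
move=> uxs xs_lt Fr pb; have [-> /hasP [j jxs abj] | kl _] := eqVneq k l; last first.
  exact: in_Erel_gen.
have [fpr prf] := prod_Emx_absorb K uxs jxs abj.
apply: (in_Erel_commutator_diag (f := Emx (be j) (be j) j)) => //.
- exact/in_salg_Emx/xs_lt.
- by apply: free_of_Emx; rewrite neq_ltn xs_lt.
- by rewrite mulrA -(comm_Emx _ _ (Fr j jxs)) -mulrA fpr mulr0.
- by rewrite -mulrA prf.
Qed.

Lemma SCI_lift (I : {set 'I_n}) (A : Op K) (N' : 'I_n) :
  N' \in I -> (N' : nat) = N -> SCI I A ->
  exists r : linop, [/\ sval r = A, in_Snm1 r & forall i : 'I_n, i \in I -> free_of i r].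
Proof.
move=> N'I N'N SA; have [r [rA Fr]] := salg_free_of SA; exists r; split=> //.
  rewrite /in_salg rA; apply: (salg_sub _ SA) => i /andP [ilt niI].
  suff : i != N by rewrite /lastv; lia.
  by apply: contraNneq niI => ->; rewrite -N'N inI_mem.
by move=> i iI; apply: Fr; rewrite negb_and negbK inI_mem ?orbT.
Qed.

Lemma Erel_EinfC_gen I (A : Op K) al be :
  inJ S I -> SCI I A -> [exists i in I, al i != be i] ->
  Erel n p_rel (opadd (@op1 K) (opmul A (Eab I al be))).
Proof.
move=> /andP [/existsP [N' /andP [N'I /eqP N'N]] /set0Pn [i0 /setIP [i0I i0S]]] SA.
move=> /existsP [j /andP [jI abj]].
have [r [<- Sr FrI]] := SCI_lift N'I N'N SA.
set xs := rem N' (enum I).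
have xs_lt i : i \in xs -> (i < n.-1)%N.
  by rewrite mem_rem_enum => /andP [iN' _]; apply: lt_lastv; rewrite -N'N.
have i0xs : i0 \in xs.
  by rewrite mem_rem_enum i0I andbT; apply: contraTneq (S_lt i0S) => ->; rewrite N'N ltnn.
set pr := \prod_(i <- xs) Emx (al i) (be i) i.
have -> : opadd (@op1 K) (opmul (sval r) (Eab I al be)) =
    sval (1 + r * pr * Emx (al N') (be N') N).
  rewrite Eab_prod (prod_Emx_rem K al be (_ : N' \in enum I)) ?mem_enum // -N'N -mulrA.
  suff -> : Emx (al N') (be N') N' * pr = pr * Emx (al N') (be N') N' by [].
  by apply/commr_sym/comm_Emx/free_of_prod_Emx => i; rewrite mem_rem_enum => /andP [].
apply: in_Erel_mul_prod_Emx.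
- by rewrite rem_uniq ?enum_uniq.
- exact: xs_lt.
- by move=> i /mem_rem; rewrite mem_enum; apply: FrI.
- by rewrite -[r * pr]mulr1; apply: in_p_prod_Emx i0S i0xs xs_lt Sr (in_salg1 K _).
apply/orP; have [abN | ] := eqVneq (al N') (be N'); [right | by left].
apply/hasP; exists j => //.
by rewrite mem_rem_enum jI andbT; apply: contraNneq abj => ->; rewrite abN.
Qed.

Lemma EinfC_sub_Erel I (g : Op K) : inJ S I -> EinfC I g -> Erel n p_rel g.
Proof.
move=> IJ; apply: subgrp_sub Erel_gens_unit _ g => _ [A [al [be [SA [ab ->]]]]].
exact: Erel_EinfC_gen.
Qed.

(* With [B = D^-1], [g M gi B] is the conjugate of [M B] times the commutator
   [g D gi B]. *)
Lemma in_Erel_conj_mod M B D g gi : in_Erel (M * B) -> in_Einf g -> g * gi = 1 -> gi * g = 1 ->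
  B * D = 1 -> in_Erel (g * D * gi * B) -> in_Erel (g * M * gi * B).
Proof.
move=> EM Eg ggi gig BD EC.
have -> : g * M * gi * B = (g * (M * B) * gi) * (g * D * gi * B).
  have -> : g * (M * B) * gi * (g * D * gi * B) = g * (M * B) * (gi * g) * (D * gi * B).
    by rewrite !mulrA.
  have -> : g * (M * B) * (gi * g) * (D * gi * B) = g * M * (B * D) * (gi * B).
    by rewrite gig mulr1 !mulrA.
  by rewrite BD mulr1 !mulrA.
exact: in_ErelM (in_Erel_conj EM Eg ggi gig) EC.
Qed.

Section Whitehead.
Variables x y c c' : linop.
Hypotheses (yx : y * x = 1) (cx : GRing.comm c x) (cy : GRing.comm c y).
Hypotheses (Sx : in_Snm1 x) (Sy : in_Snm1 y) (Fc : free_of N c) (Fc' : free_of N c').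
Hypotheses (cc' : (1 + c) * (1 + c') = 1) (c'c : (1 + c') * (1 + c) = 1).
Hypothesis p_right : forall t, in_Snm1 t -> in_p (t * c * (1 + c')).
Hypothesis p_left : forall t, in_Snm1 t -> in_p (- (c * t)).

(* The [Let]s below are the premises of the block-matrix identities; the [//]
   after each such rewrite discharges them. *)
Let E k l := Emx k l N.
Let EM k l u w : E k l * E u w = if l == u then E k w else 0.
Proof. exact: EmxM. Qed.
Let commE r k l : free_of N r -> GRing.comm r (E k l).
Proof. exact: comm_Emx. Qed.
Let F0 := free_of0 K N.
Let F1 := free_of1 K N.
Let FD := @free_ofD K N.
Let FM := @free_ofM K N.
Let FN := @free_ofN K N.
Let Fx := Snm1_free_of_last Sx.
Let Fy := Snm1_free_of_last Sy.
Let S1 : in_Snm1 1 := in_salg1 K _.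

Local Notation bl := (blk E).
Let B := bl 1 0 0 (1 + c').
Let BD : B * bl 1 0 0 (1 + c) = 1.
Proof. by have [] := blk_diag_inv EM commE F1 F0 FD Fc Fc' cc' c'c. Qed.

Lemma in_Erel_conj_blk01 t M : in_Snm1 t -> in_Erel (M * B) ->
  in_Erel (bl 1 t 0 1 * M * bl 1 (- t) 0 1 * B).
Proof.
move=> St EMB; have Ft := Snm1_free_of_last St.
have [tt' t't] := blk01_inv EM commE F1 F0 FN Ft.
apply: (in_Erel_conj_mod EMB _ tt' t't BD); first by rewrite blk01; apply: in_Einf_gen.
rewrite (blk01_commutator EM commE F1 F0 FD FN Fc Fc' cc' Ft) blk01.
exact/in_Erel_gen/p_right.
Qed.

Lemma in_Erel_conj_blk10 t M : in_Snm1 t -> in_Erel (M * B) ->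
  in_Erel (bl 1 0 t 1 * M * bl 1 0 (- t) 1 * B).
Proof.
move=> St EMB; have Ft := Snm1_free_of_last St.
have [tt' t't] := blk10_inv EM commE F1 F0 FN Ft.
apply: (in_Erel_conj_mod EMB _ tt' t't BD); first by rewrite blk10; apply: in_Einf_gen.
rewrite (blk10_commutator EM commE F1 F0 FD FN Fc Fc' cc' Ft) blk10.
exact/in_Erel_gen/p_left.
Qed.

Lemma in_Erel_whitehead : in_Erel (1 + c * (1 - x * y) * E 0 0).
Proof.
have SN1 : in_Snm1 (-1) := in_salgN S1.
have SNy : in_Snm1 (- y) := in_salgN Sy.
have e0 : in_Erel (bl 1 0 0 (1 + c) * B).
  by have [-> _] := blk_diag_inv EM commE F1 F0 FD Fc Fc' cc' c'c; apply: sg1.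
have := in_Erel_conj_blk01 SN1 e0.
rewrite opprK (whitehead_step1 (scalar := free_of N)) // => e1.
have := in_Erel_conj_blk10 S1 e1.
rewrite (whitehead_step2 (scalar := free_of N)) // => e2.
have := in_Erel_conj_blk01 SN1 e2.
rewrite opprK (whitehead_step3 (scalar := free_of N)) // => e3.
have := in_Erel_conj_blk01 Sx e3.
rewrite (whitehead_step4 (scalar := free_of N)) // => e4.
have := in_Erel_conj_blk10 SNy e4.
rewrite opprK (whitehead_step5 (scalar := free_of N)) // => e5.
have := in_Erel_conj_blk01 Sx e5.
rewrite (whitehead_step6 (scalar := free_of N)) //.
rewrite (blk_diag_mul_inv (scalar := free_of N)) // blk_diag1.
by rewrite addrAC subrr add0r.
Qed.

End Whitehead.

Lemma in_Erel_idem_e P (j : 'I_n) lam : lam != 0 -> (j : nat) != N ->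
    P * P = P -> in_Snm1 P -> free_of N P -> free_of j P ->
    (forall r s, in_Snm1 r -> in_Snm1 s -> in_p (r * P * s)) ->
  in_Erel (1 + scal (lam - 1) * P * e K j * Emx 0 0 N).
Proof.
move=> lam0 jN PP SP FPN FPj pP; have Sj := lt_lastv jN.
have coef (a b : K) : a * b = 1 -> a - 1 + (b - 1) + (a - 1) * (b - 1) = 0.
  move=> ab; have -> : a - 1 + (b - 1) + (a - 1) * (b - 1) = a * b - 1 by ring.
  by rewrite ab subrr.
set c := scal (lam - 1) * P; set c' := scal (lam^-1 - 1) * P.
have Fc k : free_of k P -> free_of k c by move=> FPk; apply/free_ofM/FPk/free_of_scal.
have Fc' k : free_of k P -> free_of k c' by move=> FPk; apply/free_ofM/FPk/free_of_scal.
rewrite eE; apply: (@in_Erel_whitehead (X K j) (Y K j) c c').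
- exact: mulYX.
- exact: (Fc j FPj).1.
- exact: (Fc j FPj).2.
- exact: in_salg_X.
- exact: in_salg_Y.
- exact: Fc.
- exact: Fc'.
- exact/scal_idem_inv/coef/mulfV.
- exact/scal_idem_inv/coef/mulVf.
- move=> t St; rewrite /c mulrA; apply: pP; first exact/in_salgM/in_salg_scal.
  exact/in_salgD/in_salgM/SP/in_salg_scal/in_salg1.
- by move=> t St; rewrite /c -!mulNr; apply: pP St; apply/in_salgN/in_salg_scal.
Qed.

Lemma UI_sub_Erel I u : inJ S I -> (2 < #|I|)%N -> UI I u -> Erel n p_rel u.
Proof.
move=> /andP [/existsP [N' /andP [N'I /eqP N'N]] /set0Pn [i0 /setIP [i0I i0S]]] I3.
move=> [lam [lam0 ->]].
have [j jI /andP [jN' ji0]] := card_gt2_avoid N' i0 I3.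
set xs := rem j (rem N' (enum I)).
have mem_xs i : (i \in xs) = [&& i != j, i != N' & i \in I].
  by rewrite mem_rem_uniq ?rem_uniq ?enum_uniq // inE mem_rem_enum.
have xs_lt i : i \in xs -> (i < n.-1)%N.
  by rewrite mem_xs => /and3P [_ iN' _]; apply: lt_lastv; rewrite -N'N.
have i0xs : i0 \in xs.
  by rewrite mem_xs eq_sym ji0 i0I andbT; apply: contraTneq (S_lt i0S) => ->; rewrite N'N ltnn.
set P := \prod_(i <- xs) Emx 0 0 i.
have FP k : (forall i, i \in xs -> (i : nat) != k) -> free_of k P := free_of_prod_Emx K _ _.
set Q := P * e K j * Emx 0 0 N.
have -> : muI I lam = sval (scal lam * Q + 1 - Q).
  by rewrite /muI (EI_split K N'I jI jN') -/xs -/P N'N.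
have -> : scal lam * Q + 1 - Q = 1 + scal (lam - 1) * P * e K j * Emx 0 0 N.
  by rewrite /Q scalB scal1 !mulrBl mul1r !mulrA addrAC addrC.
apply: in_Erel_idem_e => //.
- by rewrite -N'N.
- apply: big_prod_idem => [i _ | i k _ _]; first exact: e_idem.
  by have [-> | ik] := eqVneq i k; [apply: commr_refl | apply: comm_Emx_neq].
- exact: in_salg_prod_Emx.
- by apply: FP => i; rewrite mem_xs -N'N => /and3P [].
- by apply: FP => i; rewrite mem_xs => /and3P [].
- by move=> r s Sr Ss; apply: (in_p_prod_Emx (fun=> 0%N) (fun=> 0%N) i0S i0xs xs_lt).
Qed.

Lemma Etilde_sub_Erel (s : nat) (z : Op K) : (2 < s)%N -> Etilde S s z -> Erel n p_rel z.
Proof.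
move=> s2 [F [FJ ->]]; set L := enum _.
have LJ I : I \in L -> inJ S I /\ #|I| = s.
  by rewrite mem_enum inE => /andP [-> /eqP ->].
elim: L LJ => [|I L IHL] LJ /=; first exact: sg1.
have [IJ cI] := LJ I (mem_head _ _).
apply: subgrp_mul; last by apply: IHL => J JL; apply: LJ; rewrite inE JL orbT.
have [u [h [Uu [Eh ->]]]] := FJ I IJ cI.
by apply: subgrp_mul; [apply: UI_sub_Erel IJ _ Uu; rewrite cI | apply: EinfC_sub_Erel IJ Eh].
Qed.

End RelativeElementaryGroup.

Theorem lemma5p4 (K : fieldType) (n : nat) (S : {set 'I_n}) :
  (3 <= n)%N ->
  S != set0 ->
  (forall i : 'I_n, i \in S -> (i < n.-1)%N) ->
  let p := ideal_sum (fun i => exists2 j, j \in S & (j : nat) = i)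
                     (@pprime K n) in
  (forall I : {set 'I_n}, inJ S I -> (2 <= #|I| <= n.-1)%N ->
     forall g, EinfC I g -> Erel n p g) /\
  (forall I : {set 'I_n}, inJ S I -> (3 <= #|I| <= n.-1)%N ->
     forall u, UI I u -> Erel n p u) /\
  (forall s : nat, (3 <= s <= n.-1)%N ->
     forall z, Etilde S s z -> Erel n p z).
Proof.
move=> _ _ S_lt p; split; last split.
- by move=> I IJ _ g; exact: (EinfC_sub_Erel S_lt IJ).
- by move=> I IJ /andP [I3 _] u; exact: (UI_sub_Erel S_lt IJ I3).
- by move=> s /andP [s3 _] z; exact: (Etilde_sub_Erel S_lt s3).
Qed.
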